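(* Let $f\colon \mathbb{N}\to\mathbb{N}$ be a function, let $P\subseteq \Sigma^*\times\mathbb{N}$ be a parameterized problem that is $\ell$-General-Problem-hard$(f)$ for some integer $\ell$, and let $Q\subseteq\Sigma^*$ be the unparameterized problem associated with $P$. If there is an algorithm solving each instance $(x,k)$ of $P$ in $g(k)\cdot f(|x|)$ time (for some function $g$), then there is an algorithm solving each instance $x'$ of $Q$ in $O(f(|x'|))$ time.
   Context: A parameterized problem is a language $P\subseteq\Sigma^*\times\mathbb{N}$ over a finite alphabet $\Sigma$; for an instance $(x,k)$, $k$ is the parameter. The unparameterized problem associated with $P$ is $Q=\{x\in\Sigma^*\mid \exists k\colon (x,k)\in P\}$. For a polynomial function $f\colon\mathbb{N}\to\mathbb{N}$ and an integer $\ell$, $P$ is called $\ell$-General-Problem-hard$(f)$ if there is an algorithm $\mathcal{A}$ transforming any instance $x$ of $Q$ into an instance $(x',k')$ of $P$ such that (G1) $\mathcal{A}$ runs in $O(f(|x|))$ time, (G2) $x\in Q \iff (x',k')\in P$, (G3) $k'\le \ell$, and (G4) $|x'|\in O(|x|)$. *)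

(* A concrete machine model (deterministic single-tape Turing
   machines with a one-way infinite tape and a left-end sensor) is used to give
   meaning to "algorithm" and "running time". *)
From HB Require Import structures.
From mathcomp Require Import all_boot all_order all_algebra.
Set Implicit Arguments. Unset Strict Implicit. Unset Printing Implicit Defensive.
Import GRing.Theory Num.Theory.

Inductive move := MLeft | MStay | MRight.

(* A Turing machine with input alphabet In.  delta receives the current state,
   the scanned symbol and whether the head is on the leftmost cell. *)
Record TM (In : finType) := {
  tm_state : finType;
  tm_sym : finType;
  tm_blank : tm_sym;
  tm_in : In -> tm_sym;
  tm_in_inj : injective tm_in;
  tm_in_blank : forall a, tm_in a != tm_blank;
  tm_start : tm_state;
  tm_halt : pred tm_state;
  tm_accept : pred tm_state;
  tm_delta : tm_state -> tm_sym -> bool -> tm_state * tm_sym * move }.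

Record config (In : finType) (M : TM In) := Config {
  cf_state : tm_state M;
  cf_tape : nat -> tm_sym M;
  cf_head : nat }.

Definition step (In : finType) (M : TM In) (c : config M) : config M :=
  if @tm_halt _ M (cf_state c) then c else
  let h := cf_head c in
  let: (q', s', d) := @tm_delta _ M (cf_state c) (cf_tape c h) (h == 0) in
  Config q' (fun i => if i == h then s' else cf_tape c i)
         (match d with MLeft => h.-1 | MStay => h | MRight => h.+1 end).

Definition tape_of (A G : Type) (blank : G) (emb : A -> G) (w : seq A) : nat -> G :=
  fun i => nth blank (map emb w) i.

Definition init (In : finType) (M : TM In) (x : seq In) : config M :=
  Config (tm_start M) (tape_of (tm_blank M) (@tm_in _ M) x) 0.

Definition run (In : finType) (M : TM In) (x : seq In) (t : nat) : config M :=
  iter t (@step _ M) (init M x).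

Definition halts_within (In : finType) (M : TM In) (x : seq In) (t : nat) : bool :=
  @tm_halt _ M (cf_state (run M x t)).

Definition decides_within (In : finType) (M : TM In) (L : seq In -> Prop)
    (T : seq In -> nat) : Prop :=
  forall x, halts_within M x (T x) /\
            (@tm_accept _ M (cf_state (run M x (T x))) <-> L x).

(* Transducers: machines with an output alphabet; the output is the tape
   content at halting, which must be exactly the output word followed by blanks *)
Record TMT (In Out : finType) := {
  tmt :> TM In;
  tmt_out : Out -> tm_sym tmt;
  tmt_out_inj : injective tmt_out;
  tmt_out_blank : forall a, tmt_out a != tm_blank tmt }.

Definition computes_within (In Out : finType) (M : TMT In Out)
    (F : seq In -> seq Out) (T : seq In -> nat) : Prop :=
  forall x, halts_within M x (T x) /\
            cf_tape (run M x (T x)) =1 tape_of (tm_blank M) (@tmt_out _ _ M) (F x).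

(* Encoding of a parameterized instance (x, k) over alphabet option S:
   x followed by k copies of the fresh symbol None (k in unary). *)
Definition encode (S : Type) (x : seq S) (k : nat) : seq (option S) :=
  map Some x ++ nseq k None.

Definition bigO (T f : nat -> nat) : Prop :=
  exists c n0, forall n, n0 <= n -> T n <= c * f n.

Definition poly_fun (f : nat -> nat) : Prop :=
  exists p : {poly rat}, forall n, ((f n)%:R = p.[n%:R])%R.

Definition unparam (S : Type) (P : seq S -> nat -> Prop) : seq S -> Prop :=
  fun x => exists k, P x k.

Definition GP_hard (S : finType) (l : int) (f : nat -> nat)
    (P : seq S -> nat -> Prop) : Prop :=
  poly_fun f /\
  exists (A : TMT S (option S)) (xf : seq S -> seq S) (kf : seq S -> nat)
         (T : nat -> nat),
    bigO T f /\
    computes_within A (fun x => encode (xf x) (kf x)) (fun x => T (size x)) /\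
    (forall x, unparam P x <-> P (xf x) (kf x)) /\
    (forall x, ((kf x)%:Z <= l)%R) /\
    (exists c n0, forall x, n0 <= size x -> size (xf x) <= c * size x).

From mathcomp Require Import all_boot all_order all_algebra.
From mathcomp Require Import zify lra.

(* Run the reduction A given by hardness, rewind the head (no more steps than A
   took), and run the algorithm B for P on the produced instance (x', k').  As k' <= l, the factor g k' is at most
   the constant max_(k <= l) g k; as |x'| = O(|x|) and a polynomial f with values in
   N that is not identically zero is Theta(n^d), f |x'| = O(f |x|).  If f is
   identically zero, B answers at time 0, so its answer is a constant. *)

Set Implicit Arguments. Unset Strict Implicit. Unset Printing Implicit Defensive.
Import Order.TTheory GRing.Theory Num.Theory.

Section PolynomialGrowth.
Local Open Scope ring_scope.

Lemma horner_lead_approx (R : archiRealFieldType) (p : {poly R}) : p != 0 ->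
  exists N : nat, forall x : R, N%:R <= x ->
    `|p.[x] - lead_coef p * x ^+ (size p).-1| <= `|lead_coef p| / 2 * x ^+ (size p).-1.
Proof.
move=> p_neq0; have a_neq0 : lead_coef p != 0 by rewrite lead_coef_eq0.
move: p_neq0; rewrite -size_poly_gt0; case size_p: (size p) => [//|d] _ /=.
set a := lead_coef p; pose s := \sum_(i < d) `|p`_i|.
have s_ge0 : 0 <= s by apply: sumr_ge0 => i _; apply: normr_ge0.
have a_gt0 : 0 < `|a| by rewrite normr_gt0.
have /archi_boundP : 0 <= 2 * s / `|a| by rewrite divr_ge0 ?mulr_ge0 ?ler0n ?normr_ge0.
set N := Num.bound _ => s_lt_N.
exists N.+1 => x le_Nx.
have x_ge1 : 1 <= x by apply: le_trans le_Nx; rewrite ler1n.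
have x_gt0 : 0 < x by lra.
have s_lt_x : 2 * s / `|a| < x.
  by apply: lt_le_trans s_lt_N (le_trans _ le_Nx); rewrite ler_nat.
rewrite horner_coef size_p big_ord_recr /= [p`_d](_ : _ = a) ?addrK; last first.
  by rewrite /a /lead_coef size_p.
have low_le : x * `|\sum_(i < d) p`_i * x ^+ i| <= s * x ^+ d.
  rewrite mulrC -[x in _ * x]ger0_norm ?(ltW x_gt0) // -normrM mulr_suml.
  apply: le_trans (ler_norm_sum _ _ _) _; rewrite /s mulr_suml; apply: ler_sum => i _.
  rewrite !normrM (ger0_norm (ltW x_gt0)) (ger0_norm (exprn_ge0 _ (ltW x_gt0))).
  by rewrite -mulrA -exprSr ler_wpM2l ?normr_ge0 // ler_weXn2l.
have sa_le : 2 * s <= `|a| * x by rewrite [_ * x]mulrC -ler_pdivrMr // ltW.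
have Xd_ge0 : 0 <= x ^+ d by rewrite exprn_ge0 ?ltW.
nra.
Qed.

Definition theta_pow (f : nat -> nat) (d : nat) : Prop :=
  exists (a : rat) (B N : nat), 0 < a /\ forall n, (N <= n)%N ->
    a * n%:R ^+ d <= (f n)%:R <= B%:R * a * n%:R ^+ d.

Lemma poly_fun_theta_pow (f : nat -> nat) :
  poly_fun f -> f =1 (fun=> 0%N) \/ exists d, theta_pow f d.
Proof.
case=> p; have [-> | p_neq0] := eqVneq p 0 => f_p.
  by left => n; apply/eqP; rewrite -(pnatr_eq0 rat) f_p horner0.
right; exists (size p).-1.
have [N approx] := horner_lead_approx p_neq0.
set a := lead_coef p in approx *; set d := (size p).-1 in approx *.
have f_near n : (N <= n)%N ->
    a * n%:R ^+ d - `|a| / 2 * n%:R ^+ d <= (f n)%:R <= a * n%:R ^+ d + `|a| / 2 * n%:R ^+ d.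
  move=> le_Nn; have := approx n%:R; rewrite ler_nat f_p => /(_ le_Nn).
  by rewrite ler_distl.
have a_gt0 : 0 < a.
  have /andP[_ hi] := f_near N.+1 (leqnSn N).
  have X_pos : 0 < N.+1%:R ^+ d :> rat by rewrite exprn_gt0 ?ltr0n.
  have F_ge0 : 0 <= (f N.+1)%:R :> rat by rewrite ler0n.
  rewrite lt_neqAle eq_sym lead_coef_eq0 p_neq0 leNgt /=; apply/negP => a_lt0.
  by rewrite ltr0_norm // in hi; nra.
exists (a / 2), 3%N, N; split => [|n /f_near]; first by rewrite divr_gt0.
rewrite gtr0_norm // => /andP[lo hi]; apply/andP; split; lra.
Qed.

End PolynomialGrowth.

Definition eventually_positive (f : nat -> nat) : Prop :=
  exists N, forall n, N <= n -> 0 < f n.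

Definition moderate_growth (f : nat -> nat) : Prop :=
  forall c, exists C N, forall n m, N <= n -> m <= c * n -> f m <= C * f n.

Section ThetaPow.
Local Open Scope ring_scope.

Variables (f : nat -> nat) (d : nat).
Hypothesis f_theta : theta_pow f d.

Lemma theta_pow_eventually_positive : eventually_positive f.
Proof.
case: f_theta => a [B [N [a_gt0 f_bound]]]; exists N.+1 => n lt_Nn.
have /andP[lo _] := f_bound n (ltnW lt_Nn).
rewrite -(ltr0n rat); apply: lt_le_trans lo.
by rewrite mulr_gt0 // exprn_gt0 // ltr0n (leq_ltn_trans _ lt_Nn).
Qed.

Lemma theta_pow_moderate_growth : moderate_growth f.
Proof.
move=> c; have [Np f_pos] := theta_pow_eventually_positive.
case: f_theta => a [B [N [a_gt0 f_bound]]]; pose K := \max_(i < N) f i.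
exists (B * c ^ d + K)%N, (maxn N Np) => n m; rewrite geq_max => /andP[le_Nn le_Npn] le_m.
have fn_gt0 := f_pos n le_Npn.
have [lt_mN | le_Nm] := ltnP m N.
  have : (f m <= K)%N := leq_bigmax (Ordinal lt_mN); nia.
pose Bcd := (B * c ^ d)%N.
suff : (f m)%:R <= Bcd%:R * (f n)%:R :> rat by rewrite -natrM ler_nat; nia.
have /andP[_ hi_m] := f_bound m le_Nm; have /andP[lo_n _] := f_bound n le_Nn.
have le_mX : m%:R ^+ d <= c%:R ^+ d * n%:R ^+ d :> rat.
  by rewrite -exprMn -natrM lerXn2r ?nnegrE ?ler0n ?ler_nat.
have ge0 := ler0n rat; have Xc_ge0 : 0 <= c%:R ^+ d :> rat by rewrite exprn_ge0.
have := ler_wpM2l (mulr_ge0 (ge0 B) (ltW a_gt0)) le_mX.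
have := ler_wpM2l (mulr_ge0 (ge0 B) Xc_ge0) lo_n.
rewrite /Bcd natrM natrX; lra.
Qed.

End ThetaPow.

Section BigO.
Variable f : nat -> nat.

Lemma bigOD (T1 T2 : nat -> nat) :
  bigO T1 f -> bigO T2 f -> bigO (fun n => T1 n + T2 n) f.
Proof.
move=> [c1 [n1 T1f]] [c2 [n2 T2f]]; exists (c1 + c2), (maxn n1 n2) => n.
by rewrite geq_max mulnDl => /andP[/T1f ? /T2f ?]; apply: leq_add.
Qed.

Lemma bigOMl (c : nat) (T : nat -> nat) : bigO T f -> bigO (fun n => c * T n) f.
Proof.
by move=> [c' [n0 Tf]]; exists (c * c'), n0 => n /Tf ?; rewrite -mulnA leq_mul.
Qed.

Lemma bigO1 : eventually_positive f -> bigO (fun=> 1) f.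
Proof. by move=> [N f_pos]; exists 1, N => n /f_pos; rewrite mul1n. Qed.

Lemma bigO_max_comp (S : finType) (h : seq S -> nat) :
  moderate_growth f -> (exists c n0, forall x, n0 <= size x -> h x <= c * size x) ->
  bigO (fun n => \max_(t : n.-tuple S) f (h t)) f.
Proof.
move=> f_mod [c [n0 h_lin]]; have [C [N f_le]] := f_mod c.
exists C, (maxn n0 N) => n; rewrite geq_max => /andP[le_n0n le_Nn].
apply/bigmax_leqP => t _; apply: f_le => //.
by have := h_lin t; rewrite size_tuple; apply.
Qed.

End BigO.

Section Runs.
Variables (In : finType) (M : TM In).

Lemma iter_step_halted (c : config M) n :
  tm_halt (cf_state c) -> iter n (@step _ M) c = c.
Proof. by move=> halted; elim: n => //= n ->; rewrite /step halted. Qed.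

Lemma run_halted_after x t t' :
  halts_within M x t -> t <= t' -> run M x t' = run M x t.
Proof. by move=> halted le_tt'; rewrite /run -(subnK le_tt') iterD iter_step_halted. Qed.

Lemma head_step_le (c : config M) : cf_head (step c) <= (cf_head c).+1.
Proof.
rewrite /step; case: (tm_halt _) => //=.
by case: (tm_delta _ _ _) => [[q s] []] /=; lia.
Qed.

Lemma head_run_le x t : cf_head (run M x t) <= t.
Proof. by elim: t => //= t IH; apply: leq_trans (head_step_le _) _. Qed.

End Runs.

Lemma tape_of_map (A G G' : Type) (b : G) (e : A -> G) (b' : G') (e' : A -> G')
    (h : G -> G') w :
  h b = b' -> (forall a, h (e a) = e' a) -> h \o tape_of b e w =1 tape_of b' e' w.
Proof. by move=> hb he i; rewrite /tape_of /=; elim: w i => [|a w IH] [|i] /=. Qed.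

Section Sequential.
Variables (In Mid : finType) (A : TMT In Mid) (B : TM Mid).

Definition relabel (s : tm_sym A) : tm_sym B :=
  if [pick a | tmt_out A a == s] is Some a then tm_in B a else tm_blank B.

Lemma relabel_out a : relabel (tmt_out A a) = tm_in B a.
Proof.
by rewrite /relabel; case: pickP => [a' /eqP/tmt_out_inj -> | /(_ a)] //; rewrite eqxx.
Qed.

Lemma relabel_blank : relabel (tm_blank A) = tm_blank B.
Proof.
by rewrite /relabel; case: pickP => // a /eqP out_blank; case/eqP: (tmt_out_blank A a).
Qed.

Definition seq_sym : finType := (tm_sym A + tm_sym B)%type.
Definition seq_state : finType := (tm_state A + tm_state B)%type.

(* [inr] symbols never occur on the tape while A runs. *)
Definition symA (u : seq_sym) : tm_sym A := if u is inl s then s else tm_blank A.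
Definition symB (u : seq_sym) : tm_sym B :=
  match u with inl s => relabel s | inr s => s end.

(* Once A halts, the head walks back to cell 0 and control passes to B,
   which reads the output symbols of A through [relabel]. *)
Definition seq_delta (q : seq_state) (u : seq_sym) (at0 : bool) :
    seq_state * seq_sym * move :=
  match q with
  | inl qa =>
      if tm_halt qa then (if at0 then (inr (tm_start B), u, MStay) else (q, u, MLeft))
      else let: (q', s', d) := tm_delta qa (symA u) at0 in (inl q', inl s', d)
  | inr qb => let: (q', s', d) := tm_delta qb (symB u) at0 in (inr q', inr s', d)
  end.

Definition seq_halt (q : seq_state) : bool := if q is inr qb then tm_halt qb else false.
Definition seq_accept (q : seq_state) : bool := if q is inr qb then tm_accept qb else false.

Lemma seq_in_inj : injective (fun a : In => inl (tm_in A a) : seq_sym).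
Proof. by move=> a b [] /tm_in_inj. Qed.

Lemma seq_in_blank a : (inl (tm_in A a) : seq_sym) != inl (tm_blank A).
Proof. by rewrite inj_eq ?tm_in_blank //; apply: inl_inj. Qed.

Definition seq_tm : TM In :=
  {| tm_state := seq_state; tm_sym := seq_sym; tm_blank := inl (tm_blank A);
     tm_in := fun a => inl (tm_in A a); tm_in_inj := seq_in_inj;
     tm_in_blank := seq_in_blank; tm_start := inl (tm_start A);
     tm_halt := seq_halt; tm_accept := seq_accept; tm_delta := seq_delta |}.

Let M := seq_tm.

Definition simA (c : config M) (cA : config A) : Prop :=
  [/\ cf_state c = inl (cf_state cA), cf_head c = cf_head cA
    & cf_tape c =1 inl \o cf_tape cA].

Definition simB (c : config M) (cB : config B) : Prop :=
  [/\ cf_state c = inr (cf_state cB), cf_head c = cf_head cB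
    & symB \o cf_tape c =1 cf_tape cB].

Lemma simA_step c cA : simA c cA -> ~~ tm_halt (cf_state cA) -> simA (step c) (step cA).
Proof.
case: c cA => q t h [qA tA hA] [/= -> -> t_tA] /negbTE qA_run.
rewrite /step /= qA_run t_tA /=; case: (tm_delta _ _ _) => [[q' s'] d].
by split => // i /=; case: eqP.
Qed.

Lemma simA_run x t : (forall t', t' < t -> ~~ halts_within A x t') ->
  simA (run M x t) (run A x t).
Proof.
elim: t => [|t IH] running.
  by split => // i; symmetry; apply: (tape_of_map (h := inl)).
by apply: simA_step; [apply: IH => t' /ltnW; apply: running | apply: running].
Qed.

Definition halted_A (c : config M) : Prop :=
  exists2 q, tm_halt q & cf_state c = inl q.

Lemma rewind_step c : halted_A c -> 0 < cf_head c ->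
  [/\ cf_state (step c) = cf_state c, cf_head (step c) = (cf_head c).-1
    & cf_tape (step c) =1 cf_tape c].
Proof.
case: c => q t h [qA qA_halt /= ->] /= h_gt0.
rewrite /step /= qA_halt -[h == 0]negbK -lt0n h_gt0 /=.
by split => // i; case: eqP => // ->.
Qed.

Lemma rewind c k : halted_A c -> k <= cf_head c ->
  let c' := iter k (@step _ M) c in
  [/\ cf_state c' = cf_state c, cf_head c' = cf_head c - k & cf_tape c' =1 cf_tape c].
Proof.
move=> c_halted; elim: k => [|k IH] le_k; first by rewrite subn0.
have [st hd tp] := IH (ltnW le_k).
have [||st' hd' tp'] := rewind_step (c := iter k (@step _ M) c).
- by rewrite /halted_A st.
- by rewrite hd subn_gt0.
by split; [rewrite st' | rewrite hd' hd subnS | move=> i; rewrite tp' tp].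
Qed.

Lemma handover c w : halted_A c -> cf_head c = 0 ->
  symB \o cf_tape c =1 tape_of (tm_blank B) (tm_in B) w -> simB (step c) (init B w).
Proof.
case: c => q t h [qA qA_halt /= ->] /= -> t_w.
rewrite /step /= qA_halt; split => // i /=; rewrite -t_w /=.
by case: eqP => // ->.
Qed.

Lemma simB_step c cB : simB c cB -> simB (step c) (step cB).
Proof.
case: c cB => q t h [qB tB hB] [/= -> -> t_tB]; rewrite /step /=.
case: (tm_halt qB) => //=; rewrite -t_tB /=.
by case: (tm_delta _ _ _) => [[q' s'] d]; split => // i /=; rewrite -t_tB /=; case: eqP.
Qed.

Lemma simB_iter c cB k :
  simB c cB -> simB (iter k (@step _ M) c) (iter k (@step _ B) cB).
Proof. by move=> sim; elim: k => //= k; apply: simB_step. Qed.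

Lemma seq_reaches_B x w tA :
  halts_within A x tA -> cf_tape (run A x tA) =1 tape_of (tm_blank A) (tmt_out A) w ->
  exists2 t0, t0 <= tA + tA + 1 & simB (run M x t0) (init B w).
Proof.
move=> haltsA outA; have [t1 halts1 first1] := ex_minnP (ex_intro _ tA haltsA).
have le_t1 := first1 _ haltsA.
have [st1 hd1 tp1] : simA (run M x t1) (run A x t1).
  by apply: simA_run => t' lt_t'; apply/negP => /first1; rewrite leqNgt lt_t'.
set h := cf_head (run A x t1) in hd1; have le_h : h <= t1 := head_run_le _ _ _.
have halted1 : halted_A (run M x t1) by exists (cf_state (run A x t1)).
have [st2 hd2 tp2] := rewind (k := h) halted1 (eq_leq (esym hd1)).
exists (1 + (h + t1)); first by lia.
rewrite /run !iterD -/(run M x t1); apply: handover.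
- by rewrite /halted_A st2.
- by rewrite hd2 hd1 subnn.
- move=> i; rewrite /= tp2 tp1 /= -(run_halted_after halts1 le_t1) outA.
  by apply: tape_of_map; [apply: relabel_blank | apply: relabel_out].
Qed.

Lemma seq_tm_decides (F : seq In -> seq Mid) (L : seq In -> Prop) (TA TB T : seq In -> nat) :
  computes_within A F TA ->
  (forall x, halts_within B (F x) (TB x) /\
             (tm_accept (cf_state (run B (F x) (TB x))) <-> L x)) ->
  (forall x, TA x + TA x + 1 + TB x <= T x) ->
  decides_within M L T.
Proof.
move=> A_comp B_dec time_le x.
have [haltsA outA] := A_comp x; have [haltsB accB] := B_dec x.
have [t0 le_t0 sim0] := seq_reaches_B haltsA outA.
have [st _ _] := simB_iter (TB x) sim0.
have haltsM : halts_within M x (TB x + t0).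
  by rewrite /halts_within /run iterD -/(run M x t0) st.
rewrite /halts_within (run_halted_after haltsM); last first.
  by apply: leq_trans (time_le x); lia.
by rewrite /run iterD -/(run M x t0) st.
Qed.

End Sequential.

Definition const_tm (In : finType) (b : bool) : TM In :=
  {| tm_state := unit; tm_sym := option In; tm_blank := None;
     tm_in := @Some In; tm_in_inj := @Some_inj _; tm_in_blank := fun=> isT;
     tm_start := tt; tm_halt := predT; tm_accept := fun=> b;
     tm_delta := fun q s _ => (q, s, MStay) |}.

Lemma const_tm_decides (In : finType) (L : seq In -> Prop) (b : bool) :
  (forall x, L x <-> b) -> decides_within (const_tm In b) L (fun=> 0).
Proof. by move=> Lb x; split => //; rewrite Lb. Qed.

Theorem lemma1 (S : finType) (f : nat -> nat) (P : seq S -> nat -> Prop) (l : int) :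
  GP_hard l f P ->
  (exists (B : TM (option S)) (g : nat -> nat),
     forall x k,
       halts_within B (encode x k) (g k * f (size x)) /\
       (@tm_accept _ B (cf_state (run B (encode x k) (g k * f (size x)))) <-> P x k)) ->
  exists (M : TM S) (T : nat -> nat),
    bigO T f /\ decides_within M (unparam P) (fun x => T (size x)).
Proof.
move=> [f_poly [A [xf [kf [TA [TA_f [A_comp [P_red [kf_le xf_lin]]]]]]]]] [B [g B_dec]].
have [f0 | [d f_theta]] := poly_fun_theta_pow f_poly.
  exists (const_tm S (tm_accept (tm_start B))), (fun=> 0); split; first by exists 0, 0.
  have B0 x k : P x k <-> tm_accept (tm_start B) by have [_ <-] := B_dec x k; rewrite f0 muln0.
  by apply: const_tm_decides => x; split => [[k /B0] | /(B0 x 0)]; last exists 0.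
pose G := \max_(k < `|l|.+1) g k.
pose T n := TA n + TA n + 1 + G * \max_(t : n.-tuple S) f (size (xf t)).
exists (seq_tm A B), T; split.
  have f_pos := theta_pow_eventually_positive f_theta.
  have f_mod := theta_pow_moderate_growth f_theta.
  apply: bigOD; last exact: bigOMl (bigO_max_comp f_mod xf_lin).
  by apply: bigOD; [apply: bigOD | apply: bigO1].
apply: (seq_tm_decides (TB := fun x => g (kf x) * f (size (xf x))) A_comp) => x.
  by have [? accB] := B_dec (xf x) (kf x); rewrite P_red.
have kf_lt : kf x < `|l|.+1 by have := kf_le x; lia.
rewrite /T leq_add2l leq_mul //; first exact: leq_bigmax (Ordinal kf_lt).
exact: leq_bigmax (in_tuple x).
Qed.
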